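(* Let $f:\mathbb{R}^n\to\mathbb{R}$, $\bar x\in\mathbb{R}^n$, $a\in\mathbb{R}$, $\Delta>0$, let $I$ be a finite index set, and for $i\in I$ let $y_i\in\mathbb{R}^n$ and $s_i\in\partial f(y_i)$. For $w\in\mathbb{R}^n$ put $$h(w;\bar x,a,y_i)=f(y_i)+\tfrac a2\|y_i-\bar x\|_2^2+\langle s_i+a(y_i-\bar x),w-y_i\rangle,\qquad m(w)=\max_{i\in I}h(w;\bar x,a,y_i),$$ and $E_i=f(\bar x)-h(\bar x;\bar x,a,y_i)$ for $i\in I$. Assume there is $\bar i\in I$ with $y_{\bar i}=\bar x$ and that $E_i\ge0$ for all $i\in I$. Let $(x^*,z^* )$ be an optimal solution of the linear program $$\min_{(x,z)\in\mathbb{R}^{n+1}} z\quad\text{s.t.}\quad h(x;\bar x,a,y_i)\le z\ (i\in I),\qquad \|x-\bar x\|_\infty\le\Delta,$$ let $\bar I=\{i\in I: h(x^*;\bar x,a,y_i)=z^*\}$ be the set of active cutting-plane constraints, and let $\lambda_i$, $i\in\bar I$, be the Lagrange multipliers of these active constraints in a Karush–Kuhn–Tucker system for this linear program at $(x^*,z^* )$. (i) Then $$m(\bar x)-m(x^* )=f(\bar x)-z^*=\begin{cases}\sum_{i\in\bar I}\lambda_iE_i, & \text{if }\|x^*-\bar x\|_\infty<\Delta,\\[2pt] \sum_{i\in\bar I}\lambda_iE_i+\Delta\Big\|\sum_{i\in\bar I}\lambda_i[s_i+a(y_i-\bar x)]\Big\|_1, & \text{if }\|x^*-\bar x\|_\infty=\Delta.\end{cases}$$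 (ii) Let $C\subseteq\mathbb{R}^n$ be any set with $\bar x\in\mathrm{int}\,C$ and $y_i\in\mathrm{int}\,C$ for all $i\in\bar I$, and suppose additionally that $a$ is such that, with $g(y;x,a)=f(y)+\frac a2\|y-x\|_2^2$, for every $x\in\mathbb{R}^n$ the function $g(\cdot;x,a)$ is the restriction to $C$ of a convex function $H(\cdot;x,a):\mathbb{R}^n\to\mathbb{R}$ satisfying $g(y;x,a)\ge H(y;x,a)$ for all $y\in\mathbb{R}^n$. Then $$\sum_{i\in\bar I}\lambda_i[s_i+a(y_i-\bar x)]\in\partial_{\tilde\epsilon}g(\bar x;\bar x,a),\qquad \tilde\epsilon=\sum_{i\in\bar I}\lambda_iE_i;$$ and furthermore, if $0\in\partial_0 g(\bar x;\bar x,a)$, then $\bar x$ is a global minimizer of $g(\cdot;\bar x,a)$ on $\mathbb{R}^n$.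
   Context: $\partial f$ denotes the basic (limiting) subdifferential. $\|\cdot\|_1,\|\cdot\|_2,\|\cdot\|_\infty$ are the one, two and infinity norms. For a point $y\in\mathrm{int}\,C$, the $\epsilon$-subdifferential of $g(\cdot;\bar x,a)$ is defined as that of the convex function $H(\cdot;\bar x,a)$: $\partial_\epsilon g(y;\bar x,a):=\{v\in\mathbb{R}^n: H(z;\bar x,a)\ge H(y;\bar x,a)+\langle v,z-y\rangle-\epsilon\ \forall z\in\mathbb{R}^n\}$. *)

From HB Require Import structures.
From mathcomp Require Import all_boot all_order all_algebra.
From mathcomp Require Import reals.
Set Implicit Arguments. Unset Strict Implicit. Unset Printing Implicit Defensive.
Import Order.TTheory GRing.Theory Num.Theory.
Local Open Scope ring_scope.

Section Defs.
Variables (R : realType) (n : nat).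
Notation vec := 'rV[R]_n.

Definition dotv (u v : vec) : R := \sum_(j < n) u ord0 j * v ord0 j.
Definition norm2 (v : vec) : R := Num.sqrt (dotv v v).
Definition norm1 (v : vec) : R := \sum_(j < n) `|v ord0 j|.
Definition norminf (v : vec) : R := \big[Num.max/0]_(j < n) `|v ord0 j|.

Definition frechet_subgrad (f : vec -> R) (x v : vec) : Prop :=
  forall eps : R, 0 < eps -> exists2 delta : R, 0 < delta &
    forall y : vec, norm2 (y - x) < delta ->
      f x + dotv v (y - x) - eps * norm2 (y - x) <= f y.

(* basic (limiting) subgradient: v \in \partial f(x) *)
Definition limiting_subgrad (f : vec -> R) (x v : vec) : Prop :=
  exists (xk vk : nat -> vec),
    (forall k, frechet_subgrad f (xk k) (vk k)) /\
    (forall eps : R, 0 < eps -> exists N : nat, forall k, (N <= k)%N ->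
       [/\ norm2 (xk k - x) < eps, `|f (xk k) - f x| < eps
         & norm2 (vk k - v) < eps]).

Definition interior_pt (C : vec -> Prop) (x : vec) : Prop :=
  exists2 r : R, 0 < r & forall y : vec, norm2 (y - x) < r -> C y.

Definition convex_fun (F : vec -> R) : Prop :=
  forall (x y : vec) (t : R), 0 <= t <= 1 ->
    F (t *: x + (1 - t) *: y) <= t * F x + (1 - t) * F y.

Definition eps_subgrad (F : vec -> R) (y : vec) (eps : R) (v : vec) : Prop :=
  forall z : vec, F y + dotv v (z - y) - eps <= F z.

Definition gfun (f : vec -> R) (a : R) (x y : vec) : R :=
  f y + a / 2 * norm2 (y - x) ^+ 2.

Section CuttingPlane.
Variables (I : finType) (f : vec -> R) (xbar : vec) (a : R) (y s : I -> vec).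

Definition cp_slope (i : I) : vec := s i + a *: (y i - xbar).

Definition cp_h (i : I) (w : vec) : R :=
  f (y i) + a / 2 * norm2 (y i - xbar) ^+ 2 + dotv (cp_slope i) (w - y i).

(* m(w) = max_i h(w; xbar, a, y_i); i0 is any element of I used as seed *)
Definition cp_model (i0 : I) (w : vec) : R :=
  \big[Num.max/cp_h i0 w]_(i : I) cp_h i w.

Definition cp_err (i : I) : R := f xbar - cp_h i xbar.

Definition lp_feasible (Delta : R) (x : vec) (z : R) : Prop :=
  (forall i, cp_h i x <= z) /\ norminf (x - xbar) <= Delta.

Definition lp_optimal (Delta : R) (xs : vec) (zs : R) : Prop :=
  lp_feasible Delta xs zs /\
  forall x z, lp_feasible Delta x z -> zs <= z.

(* KKT system of the LP, written with the box constraint as the 2n linear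
   constraints x_j - xbar_j <= Delta and xbar_j - x_j <= Delta, with
   multipliers lam (cutting planes), mup, mum (box constraints). *)
Definition lp_KKT (Delta : R) (xs : vec) (zs : R)
    (lam : I -> R) (mup mum : 'I_n -> R) : Prop :=
  [/\ lp_feasible Delta xs zs,
      (forall i, 0 <= lam i) /\ (forall j, 0 <= mup j /\ 0 <= mum j),
      1 - \sum_(i : I) lam i = 0 /\
      (forall j : 'I_n,
         \sum_(i : I) lam i * cp_slope i ord0 j + mup j - mum j = 0),
      (forall i, lam i * (cp_h i xs - zs) = 0)
    & (forall j : 'I_n,
         mup j * (xs ord0 j - xbar ord0 j - Delta) = 0 /\
         mum j * (xbar ord0 j - xs ord0 j - Delta) = 0)].

End CuttingPlane.
End Defs.

(* The cutting-plane model m is f(xbar) at xbar, since E_i >= 0 with equality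
   at ibar, and zs at xs, by optimality of (xs, zs).  Summing the
   complementary slackness identities lam_i (h_i(xs) - zs) = 0, with weights
   summing to one, writes zs as the lam-average of the affine cuts at xs,
   that is f(xbar) - sum_i lam_i E_i + <d, xs - xbar> with
   d = sum_i lam_i (s_i + a (y_i - xbar)).  Stationarity in x gives
   d_j = mum_j - mup_j, and complementary slackness for the box turns
   <d, xbar - xs> into Delta ||d||_1; when the box is inactive all box
   multipliers vanish and d = 0.  This is part (i).
   For part (ii), every active cut is a global affine minorant of the convex
   function H(.; xbar, a): a limiting subgradient of f at an interior point
   y_i is a limit of Frechet subgradients at nearby points, where H agrees
   with g(.; xbar, a), and a Frechet subgradient of a convex function is a
   subgradient.  Averaging the cuts with the weights lam and using the
   identity above at an arbitrary point gives the eps-subgradient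
   inequality. *)

From mathcomp Require Import all_boot all_order all_algebra.
From mathcomp Require Import reals.
From mathcomp Require Import all_classical all_analysis.
From mathcomp Require Import ring lra.
Import Order.TTheory GRing.Theory Num.Theory.
Import numFieldNormedType.Exports.
Set Implicit Arguments. Unset Strict Implicit.
Local Open Scope classical_set_scope.
Local Open Scope ring_scope.

Section EuclideanGeometry.
Variables (R : realType) (n : nat).
Notation vec := 'rV[R]_n.
Implicit Types (u v w : vec).

Lemma dotvC u v : dotv u v = dotv v u.
Proof. by apply: eq_bigr => j _; rewrite mulrC. Qed.

Lemma dotvDl u v w : dotv (u + v) w = dotv u w + dotv v w.
Proof. by rewrite /dotv -big_split; apply: eq_bigr => j _; rewrite !mxE mulrDl. Qed.

Lemma dotvDr u v w : dotv w (u + v) = dotv w u + dotv w v.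
Proof. by rewrite dotvC dotvDl !(dotvC w). Qed.

Lemma dotvZl t u w : dotv (t *: u) w = t * dotv u w.
Proof. by rewrite /dotv mulr_sumr; apply: eq_bigr => j _; rewrite !mxE mulrA. Qed.

Lemma dotvZr t u w : dotv w (t *: u) = t * dotv w u.
Proof. by rewrite dotvC dotvZl dotvC. Qed.

Lemma dotvNr u v : dotv u (- v) = - dotv u v.
Proof. by rewrite -scaleN1r dotvZr mulN1r. Qed.

Lemma dotv0l w : dotv 0 w = 0.
Proof. by rewrite -(scale0r 0) dotvZl mul0r. Qed.

Lemma dotv0r w : dotv w 0 = 0.
Proof. by rewrite dotvC dotv0l. Qed.

Lemma dotv_suml (I : finType) (c : I -> R) (V : I -> vec) w :
  dotv (\sum_i c i *: V i) w = \sum_i c i * dotv (V i) w.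
Proof.
apply: (big_rec2 (fun u r => dotv u w = r)) => [|i u r _ <-].
  exact: dotv0l.
by rewrite dotvDl dotvZl.
Qed.

Lemma dotvv_ge0 u : 0 <= dotv u u.
Proof. by apply: sumr_ge0 => j _; rewrite -expr2 sqr_ge0. Qed.

Lemma norm2_ge0 u : 0 <= norm2 u.
Proof. exact: sqrtr_ge0. Qed.

Lemma norm2_sqr u : norm2 u ^+ 2 = dotv u u.
Proof. by rewrite /norm2 sqr_sqrtr // dotvv_ge0. Qed.

Lemma norm20 : norm2 (0 : vec) = 0.
Proof. by rewrite /norm2 dotv0l sqrtr0. Qed.

Lemma norm2Z t u : norm2 (t *: u) = `|t| * norm2 u.
Proof.
by rewrite /norm2 dotvZl dotvZr mulrA -expr2 sqrtrM ?sqr_ge0 // sqrtr_sqr.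
Qed.

Lemma norm2N u : norm2 (- u) = norm2 u.
Proof. by rewrite -scaleN1r norm2Z normrN1 mul1r. Qed.

Lemma norm2D_sqr u v :
  norm2 (u + v) ^+ 2 = norm2 u ^+ 2 + 2 * dotv u v + norm2 v ^+ 2.
Proof. rewrite !norm2_sqr !dotvDl !dotvDr (dotvC v u); ring. Qed.

Lemma norm2D_lt u v r : norm2 u < r / 2 -> norm2 v < r / 2 -> norm2 (u + v) < r.
Proof.
move=> hu hv.
have huv : 2 * dotv u v <= norm2 u ^+ 2 + norm2 v ^+ 2.
  by have := sqr_ge0 (norm2 (u - v)); rewrite norm2D_sqr dotvNr norm2N; lra.
have := norm2D_sqr u v; have := norm2_ge0 u; have := norm2_ge0 v.
have := norm2_ge0 (u + v); nra.
Qed.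

Lemma coord_le_norm2 u j : `|u ord0 j| <= norm2 u.
Proof.
rewrite -sqrtr_sqr ler_sqrt ?dotvv_ge0 // /dotv (bigD1 j) //= -expr2 lerDl.
by apply: sumr_ge0 => k _; rewrite -expr2 sqr_ge0.
Qed.

Lemma norm10 : norm1 (0 : vec) = 0.
Proof. by rewrite /norm1 big1 // => j _; rewrite mxE normr0. Qed.

End EuclideanGeometry.

Section FrechetSubgradient.
Variables (R : realType) (n : nat).
Notation vec := 'rV[R]_n.

Lemma frechet_subgrad_local (F G : vec -> R) (p v : vec) (r : R) : 0 < r ->
  (forall w, norm2 (w - p) < r -> F w = G w) ->
  frechet_subgrad F p v -> frechet_subgrad G p v.
Proof.
move=> r0 FG hF eps /hF[d d0 hd]; exists (Num.min d r); first by rewrite lt_min d0.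
move=> w; rewrite lt_min => /andP[wd wr].
by rewrite -!FG ?subrr ?norm20 //; apply: hd.
Qed.

Lemma frechet_subgradD_sqrdist (f : vec -> R) (a : R) (c p v : vec) :
  frechet_subgrad f p v -> frechet_subgrad (gfun f a c) p (v + a *: (p - c)).
Proof.
move=> hf eps eps0.
have [d d0 hd] := hf (eps / 2) (divr_gt0 eps0 (ltr0Sn _ 1)).
have a1 : 0 < `|a| + 1 by rewrite ltr_pwDr.
exists (Num.min d (eps / (`|a| + 1))); first by rewrite lt_min d0 divr_gt0.
move=> w; rewrite lt_min => /andP[wd wa].
have hfw := hd w wd.
set N := norm2 (w - p) in wa hfw *.
have N0 : 0 <= N := norm2_ge0 _.
have haN : `|a| * N <= eps.
  by move: wa; rewrite ltr_pdivlMr // => /ltW; nra.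
have hquad : - (eps * N) <= a * N ^+ 2.
  have := ler_norm (- a); rewrite normrN; nra.
rewrite /gfun (_ : w - c = (p - c) + (w - p)); last by rewrite [RHS]addrC addrA subrK.
rewrite (norm2D_sqr (p - c)) dotvDl dotvZl -/N.
lra.
Qed.

(* Convexity along the segment from p to z carries the first-order bound,
   valid only near p, all the way to z. *)
Lemma convex_frechet_subgrad (G : vec -> R) (p u : vec) :
  convex_fun G -> frechet_subgrad G p u ->
  forall z, G p + dotv u (z - p) <= G z.
Proof.
move=> cG hG z; apply/ler_addgt0Pr => e e0.
set N := norm2 (z - p); have N0 : 0 <= N := norm2_ge0 _.
have N1 : 0 < N + 1 by rewrite ltr_pwDr.
have [d d0 hd] := hG (e / (N + 1)) (divr_gt0 e0 N1).
set t := Num.min 1 (d / (N + 1)).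
have t0 : 0 < t by rewrite lt_min ltr01 divr_gt0.
have /andP[t1 td] : (t <= 1) && (t * (N + 1) <= d).
  by rewrite -ler_pdivlMr // -le_min.
have eN : e / (N + 1) * N <= e.
  by rewrite mulrAC ler_pdivrMr //; nra.
have wp : (p + t *: (z - p)) - p = t *: (z - p) by rewrite [p + _]addrC addrK.
have := hd (p + t *: (z - p)).
rewrite wp norm2Z gtr0_norm // dotvZr -/N => /(_ ltac:(nra)) hw.
have := cG z p t; rewrite ltW //= t1 => /(_ isT).
have -> : t *: z + (1 - t) *: p = p + t *: (z - p).
  by rewrite scalerBr scalerBl scale1r addrCA addrA.
move=> hc.
have key : 0 <= t * (G z - G p - dotv u (z - p) + e / (N + 1) * N) by nra.
by move: key; rewrite pmulr_rge0 //; lra.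
Qed.

End FrechetSubgradient.

Section LimitingSubgradient.
Variables (R : realType) (n : nat).
Notation vec := 'rV[R]_n.
Implicit Types (X Y : nat -> vec) (x y : vec).

Lemma cvg_norm2 X x :
  (forall e, 0 < e -> exists N : nat, forall k, (N <= k)%N -> norm2 (X k - x) < e) ->
  X @ \oo --> x.
Proof.
move=> hX; apply/cvgrPdist_lt => e /hX[N hN]; exists N => // k /= /hN.
apply: le_lt_trans; rewrite [leLHS]/Num.norm /= mx_normrE.
apply: bigmax_le => [|[i j] _ /=]; first exact: norm2_ge0.
by rewrite (ord1 i) -norm2N opprB coord_le_norm2.
Qed.

Lemma cvg_coord X x j : X @ \oo --> x -> (fun k => X k ord0 j) @ \oo --> x ord0 j.
Proof. exact: (continuous_cvg _ (@coord_continuous R 1 n ord0 j x)). Qed.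

Lemma cvg_dotv X Y x y : X @ \oo --> x -> Y @ \oo --> y ->
  (fun k => dotv (X k) (Y k)) @ \oo --> dotv x y.
Proof.
move=> hX hY; apply: (@cvg_big _ _ +%R 0 xpredT add_continuous) => // j _.
by apply: cvgM; apply: cvg_coord.
Qed.

Lemma limiting_subgrad_convex_minorant (G : vec -> R) (C : vec -> Prop)
    (f : vec -> R) (a : R) (c p v : vec) :
  convex_fun G -> (forall w, C w -> gfun f a c w = G w) ->
  interior_pt C p -> limiting_subgrad f p v ->
  forall z, gfun f a c p + dotv (v + a *: (p - c)) (z - p) <= G z.
Proof.
move=> cG GC [r r0 Cr] [xk [vk [xk_sub xk_cvg]]] z.
have r20 : 0 < r / 2 by rewrite divr_gt0.
have minorant_k k : norm2 (xk k - p) < r / 2 ->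
    gfun f a c (xk k) + dotv (vk k + a *: (xk k - c)) (z - xk k) <= G z.
  move=> hk.
  have C_near w : norm2 (w - xk k) < r / 2 -> C w.
    by move=> hw; apply: Cr; rewrite -(subrK (xk k) w) -addrA norm2D_lt.
  rewrite (GC _ (C_near _ _)) ?subrr ?norm20 //.
  apply: convex_frechet_subgrad cG _ z.
  apply: frechet_subgrad_local r20 _ (frechet_subgradD_sqrdist a c (xk_sub k)).
  by move=> w /C_near /GC.
have [K hK] := xk_cvg (r / 2) r20.
have xk_p : xk @ \oo --> p.
  by apply: cvg_norm2 => e /xk_cvg[N hN]; exists N => k /hN[].
have vk_v : vk @ \oo --> v.
  by apply: cvg_norm2 => e /xk_cvg[N hN]; exists N => k /hN[].
have fxk : (fun k => f (xk k)) @ \oo --> f p.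
  by apply/cvgrPdistC_lt => e /xk_cvg[N hN]; exists N => // k /= /hN[].
have lim : (fun k => gfun f a c (xk k) + dotv (vk k + a *: (xk k - c)) (z - xk k))
    @ \oo --> gfun f a c p + dotv (v + a *: (p - c)) (z - p).
  rewrite /gfun norm2_sqr; under eq_fun do rewrite norm2_sqr.
  have xk_c : (fun k => xk k - c) @ \oo --> p - c.
    by apply: cvgB => //; apply: cvg_cst.
  have z_xk : (fun k => z - xk k) @ \oo --> z - p.
    by apply: cvgB => //; apply: cvg_cst.
  have slope_k : (fun k => vk k + a *: (xk k - c)) @ \oo --> v + a *: (p - c).
    by apply: cvgD => //; apply: cvgZ => //; apply: cvg_cst.
  apply: cvgD; last exact: cvg_dotv slope_k z_xk.
  by apply: cvgD => //; apply: cvgM; [apply: cvg_cst|exact: (cvg_dotv xk_c xk_c)].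
apply: (ler_cvg_to lim (cvg_cst (G z))).
by exists K => // k /= /hK[hk _ _]; apply: minorant_k.
Qed.

End LimitingSubgradient.

Section CuttingPlaneModel.
Variables (R : realType) (n : nat) (I : finType).
Variables (f : 'rV[R]_n -> R) (xbar : 'rV[R]_n) (a : R) (y s : I -> 'rV[R]_n).
Local Notation h := (cp_h f xbar a y s).
Local Notation E := (cp_err f xbar a y s).
Local Notation slope := (cp_slope xbar a y s).
Local Notation model := (cp_model f xbar a y s).

Lemma cp_hE i w : h i w = f xbar - E i + dotv (slope i) (w - xbar).
Proof.
rewrite /cp_err /cp_h (_ : w - y i = (xbar - y i) + (w - xbar)).
  by rewrite dotvDr; ring.
by rewrite [RHS]addrC addrA subrK.
Qed.

Lemma cp_model_xbar i0 ibar :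
  y ibar = xbar -> (forall i, 0 <= E i) -> model i0 xbar = f xbar.
Proof.
move=> y_ibar E_ge0; have h_le i : h i xbar <= f xbar by rewrite -subr_ge0; apply: E_ge0.
apply/le_anti; rewrite bigmax_le //=.
apply: (le_trans _ (le_bigmax _ _ ibar)).
by rewrite /cp_h y_ibar !subrr norm20 dotv0r expr2 mul0r mulr0 !addr0.
Qed.

Lemma cp_model_lp_optimal Delta xs zs i0 :
  lp_optimal f xbar a y s Delta xs zs -> model i0 xs = zs.
Proof.
move=> [[h_le box] zs_min]; apply/le_anti.
rewrite bigmax_le //= (zs_min xs) //; split=> // i; exact: le_bigmax.
Qed.

Section KKT.
Variables (Delta : R) (xs : 'rV[R]_n) (zs : R) (lam : I -> R) (mup mum : 'I_n -> R).
Hypothesis kkt : lp_KKT f xbar a y s Delta xs zs lam mup mum.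
Local Notation agg := (\sum_i lam i *: slope i).

Lemma kkt_lam_eq0 i : h i xs != zs -> lam i = 0.
Proof.
case: kkt => _ _ _ /(_ i) /eqP + _.
by rewrite mulf_eq0 subr_eq0 => /orP[/eqP|/[swap]/negbTE->].
Qed.

Lemma kkt_sum_active (F : I -> R) :
  \sum_(i | h i xs == zs) lam i * F i = \sum_i lam i * F i.
Proof. by apply: big_rmcond => i /kkt_lam_eq0 ->; rewrite mul0r. Qed.

Lemma kkt_sum_activeZ (F : I -> 'rV[R]_n) :
  \sum_(i | h i xs == zs) lam i *: F i = \sum_i lam i *: F i.
Proof. by apply: big_rmcond => i /kkt_lam_eq0 ->; rewrite scale0r. Qed.

Lemma kkt_lam_sum1 : \sum_i lam i = 1.
Proof. by case: kkt => _ _ [/eqP]; rewrite subr_eq0 => /eqP <-. Qed.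

Lemma kkt_aggregate w :
  \sum_i lam i * h i w = f xbar - \sum_i lam i * E i + dotv agg (w - xbar).
Proof.
under eq_bigr do rewrite cp_hE mulrDr mulrBr.
by rewrite big_split sumrB -mulr_suml kkt_lam_sum1 mul1r dotv_suml.
Qed.

Lemma kkt_aggregate_xs : \sum_i lam i * h i xs = zs.
Proof.
have cs i : lam i * h i xs = lam i * zs.
  by case: kkt => _ _ _ /(_ i) /eqP + _; rewrite mulrBr subr_eq0 => /eqP.
by rewrite (eq_bigr _ (fun i _ => cs i)) -mulr_suml kkt_lam_sum1 mul1r.
Qed.

Lemma kkt_agg_coord j : agg ord0 j = mum j - mup j.
Proof.
case: kkt => _ _ [_ /(_ j) stat] _ _.
rewrite summxE; under eq_bigr do rewrite mxE.
lra.
Qed.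

Lemma kkt_box_coord j :
  (mum j - mup j) * (xbar ord0 j - xs ord0 j) = Delta * `|mum j - mup j|.
Proof.
case: kkt => _ [_ /(_ j)[mup0 mum0]] _ _ /(_ j)[/eqP cs_p /eqP cs_m].
move: cs_p cs_m; rewrite !mulf_eq0 !subr_eq0.
case/orP=> [/eqP-> | /eqP xs_up]; case/orP=> [/eqP-> | /eqP xs_lo].
- by rewrite subrr normr0 mul0r mulr0.
- by rewrite subr0 ger0_norm // xs_lo mulrC.
- rewrite sub0r normrN ger0_norm // (_ : _ - _ = - Delta); first by ring.
  by rewrite -opprB xs_up.
- have [-> ->] : Delta = 0 /\ xbar ord0 j - xs ord0 j = 0 by lra.
  by rewrite mulr0 mul0r.
Qed.

Lemma kkt_gap : f xbar - zs = \sum_i lam i * E i + Delta * norm1 agg.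
Proof.
have box : dotv agg (xbar - xs) = Delta * norm1 agg.
  rewrite /norm1 mulr_sumr; apply: eq_bigr => j _.
  by rewrite kkt_agg_coord !mxE kkt_box_coord.
rewrite -kkt_aggregate_xs kkt_aggregate -box -[xbar - xs]opprB dotvNr; ring.
Qed.

Lemma kkt_interior_agg0 : norminf (xs - xbar) < Delta -> agg = 0.
Proof.
move=> interior; apply/rowP => j; rewrite kkt_agg_coord mxE.
have : `|(xs - xbar) ord0 j| < Delta.
  exact: le_lt_trans (le_bigmax _ (fun k => `|(xs - xbar) ord0 k|) j) interior.
rewrite !mxE ltr_norml => /andP[lo up].
case: kkt => _ _ _ _ /(_ j)[/eqP + /eqP].
rewrite !mulf_eq0 !subr_eq0 => /orP[/eqP-> | /eqP ? _]; last lra.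
by case/orP=> [/eqP-> | /eqP ?]; [rewrite subr0 | lra].
Qed.

Lemma kkt_eps_subgrad (G : 'rV[R]_n -> R) (C : 'rV[R]_n -> Prop) :
  (forall i, limiting_subgrad f (y i) (s i)) ->
  convex_fun G -> (forall w, C w -> gfun f a xbar w = G w) -> C xbar ->
  (forall i, h i xs = zs -> interior_pt C (y i)) ->
  eps_subgrad G xbar (\sum_i lam i * E i) agg.
Proof.
move=> subgrad cG GC Cx Cy z.
have minorant : \sum_i lam i * h i z <= G z.
  rewrite -[G z]mul1r -kkt_lam_sum1 mulr_suml; apply: ler_sum => i _.
  have [/eqP active | /kkt_lam_eq0 ->] := boolP (h i xs == zs); last by rewrite !mul0r.
  case: kkt => _ [/(_ i) lam0 _] _ _ _; apply: ler_wpM2l lam0 _ _ _.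
  exact: limiting_subgrad_convex_minorant cG GC (Cy i active) (subgrad i) z.
rewrite -(GC _ Cx) /gfun subrr norm20 expr2 mul0r mulr0 addr0.
by move: minorant; rewrite kkt_aggregate; lra.
Qed.

End KKT.

End CuttingPlaneModel.

Theorem lemma2 (R : realType) (n : nat) (I : finType)
    (f : 'rV[R]_n -> R) (xbar : 'rV[R]_n) (a Delta : R)
    (y s : I -> 'rV[R]_n) (ibar : I)
    (xs : 'rV[R]_n) (zs : R) (lam : I -> R) (mup mum : 'I_n -> R) :
  0 < Delta ->
  (forall i, limiting_subgrad f (y i) (s i)) ->
  y ibar = xbar ->
  (forall i, 0 <= cp_err f xbar a y s i) ->
  lp_optimal f xbar a y s Delta xs zs ->
  lp_KKT f xbar a y s Delta xs zs lam mup mum ->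
  (* part (i) *)
  [/\ cp_model f xbar a y s ibar xbar - cp_model f xbar a y s ibar xs
        = f xbar - zs,
      norminf (xs - xbar) < Delta ->
        f xbar - zs
          = \sum_(i | cp_h f xbar a y s i xs == zs)
              lam i * cp_err f xbar a y s i
    & norminf (xs - xbar) = Delta ->
        f xbar - zs
          = \sum_(i | cp_h f xbar a y s i xs == zs)
              lam i * cp_err f xbar a y s i
            + Delta * norm1 (\sum_(i | cp_h f xbar a y s i xs == zs)
                               lam i *: cp_slope xbar a y s i)]
  /\
  (* part (ii) *)
  (forall (C : 'rV[R]_n -> Prop) (H : 'rV[R]_n -> 'rV[R]_n -> R),
     interior_pt C xbar ->
     (forall i, cp_h f xbar a y s i xs = zs -> interior_pt C (y i)) ->
     (forall x, convex_fun (H x)) ->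
     (forall x z, C z -> gfun f a x z = H x z) ->
     (forall x z, H x z <= gfun f a x z) ->
     eps_subgrad (H xbar) xbar
       (\sum_(i | cp_h f xbar a y s i xs == zs) lam i * cp_err f xbar a y s i)
       (\sum_(i | cp_h f xbar a y s i xs == zs) lam i *: cp_slope xbar a y s i)
     /\
     (eps_subgrad (H xbar) xbar 0 0 ->
        forall z, gfun f a xbar xbar <= gfun f a xbar z)).
Proof.
move=> _ subgrad y_ibar E_ge0 opt kkt.
rewrite (kkt_sum_active kkt) (kkt_sum_activeZ kkt).
split; first split.
- by rewrite (cp_model_xbar _ y_ibar E_ge0) (cp_model_lp_optimal _ opt).
- by move/(kkt_interior_agg0 kkt) => agg0; rewrite (kkt_gap kkt) agg0 norm10 mulr0 addr0.
- by move=> _; exact: kkt_gap kkt.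
move=> C H [r r0 Cr] Cy cH HC H_le.
have Cx : C xbar by apply: Cr; rewrite subrr norm20.
split; first exact: (kkt_eps_subgrad kkt subgrad (cH xbar) (HC xbar) Cx Cy).
move=> zero_subgrad z; rewrite (HC _ _ Cx); apply: le_trans (H_le xbar z).
by have := zero_subgrad z; rewrite dotv0l subr0 addr0.
Qed.
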